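(* For any compact set $K\subset\mathbb C\setminus\partial\Delta$ there is $\delta>0$ such that in either of the cases (1) $p\in K$, $|p|>1$, $|q|<1$ and $\operatorname{dist}(q,\partial\Delta)<\delta$, or (2) $q\in K$, $|q|<1$, $|p|>1$ and $\operatorname{dist}(p,\partial\Delta)<\delta$, the Blaschke product $B_{p,q}$ has at least two distinct critical points on $\partial\Delta$.
   Context: $\Delta$ is the unit disk. For $|p|>1$, $|q|<1$, $B_{p,q}(z)=z\,\frac{z-p}{1-\bar pz}\,\frac{z-q}{1-\bar qz}$. *)

From Stdlib Require Import Reals Lra.
Open Scope R_scope.

Definition Cplx : Type := (R * R)%type.
Definition Cadd (z w : Cplx) : Cplx := (fst z + fst w, snd z + snd w).
Definition Csub (z w : Cplx) : Cplx := (fst z - fst w, snd z - snd w).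
Definition Cmul (z w : Cplx) : Cplx :=
  (fst z * fst w - snd z * snd w, fst z * snd w + snd z * fst w).
Definition Cconj (z : Cplx) : Cplx := (fst z, - snd z).
Definition Cone : Cplx := (1, 0).
Definition Czero : Cplx := (0, 0).
Definition Cnorm (z : Cplx) : R := sqrt (fst z * fst z + snd z * snd z).
Definition Cinv (z : Cplx) : Cplx :=
  let n2 := fst z * fst z + snd z * snd z in (fst z / n2, - snd z / n2).
Definition Cdiv (z w : Cplx) : Cplx := Cmul z (Cinv w).

Definition Blaschke (p q : Cplx) (z : Cplx) : Cplx :=
  Cmul z (Cmul (Cdiv (Csub z p) (Csub Cone (Cmul (Cconj p) z)))
               (Cdiv (Csub z q) (Csub Cone (Cmul (Cconj q) z)))).

Definition Cderiv_at (f : Cplx -> Cplx) (z l : Cplx) : Prop :=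
  forall eps, 0 < eps -> exists d, 0 < d /\
    forall h : Cplx, h <> Czero -> Cnorm h < d ->
      Cnorm (Csub (Cdiv (Csub (f (Cadd z h)) (f z)) h) l) < eps.

Definition critical_point (f : Cplx -> Cplx) (z : Cplx) : Prop := Cderiv_at f z Czero.

(* compact subsets of C = R^2: closed and bounded (Heine-Borel) *)
Definition Cclosed (K : Cplx -> Prop) : Prop :=
  forall z, ~ K z -> exists r, 0 < r /\ forall w, Cnorm (Csub w z) < r -> ~ K w.
Definition Cbounded (K : Cplx -> Prop) : Prop :=
  exists M, forall z, K z -> Cnorm z <= M.
Definition Ccompact (K : Cplx -> Prop) : Prop := Cclosed K /\ Cbounded K.

Definition dist_circle (z : Cplx) : R := Rabs (Cnorm z - 1).

(* Write B = N / D with N(z) = z (z-p)(z-q) and D(z) = (1 - conj(p) z)(1 - conj(q) z).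
   A polynomial identity gives N(z+h) D(z) - N(z) D(z+h) = h W(z) + h^2 S(z,h), so
   B'(z) = 0 at every zero z of W where D does not vanish; on the unit circle D does
   not vanish when |p|, |q| <> 1. On the circle, conj z = 1/z turns W into z^2 Phi(z),
   with the real function
     Phi(z) = |z-p|^2 |z-q|^2 + (1-|p|^2) |z-q|^2 + (1-|q|^2) |z-p|^2.
   If Phi takes both signs on the circle, the intermediate value theorem applied to the
   2 PI-periodic function t |-> Phi(e^{it}) yields two distinct zeros, i.e. two
   critical points. Finally a compact K avoiding the circle lies outside an annulus
   1 - m < |z| < 1 + m, and for delta = m^2 / (4 M^2) (M >= 1 bounding K) explicit
   points of the circle where Phi is negative and positive are exhibited in both cases. *)

From Stdlib Require Import Reals Lra Psatz Nsatz.
Open Scope R_scope.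

(** * Complex arithmetic on [R * R] *)

(* Negation, needed to present [Cplx] as a field. *)
Definition Copp (z : Cplx) : Cplx := (- fst z, - snd z).

(* Squared modulus; it is a polynomial, hence the workhorse of all estimates. *)
Definition Cnorm2 (z : Cplx) : R := fst z * fst z + snd z * snd z.

Lemma C_ext (a b : Cplx) : fst a = fst b -> snd a = snd b -> a = b.
Proof. destruct a, b; simpl; intros -> ->; reflexivity. Qed.

Lemma Cnorm2_nonneg (z : Cplx) : 0 <= Cnorm2 z.
Proof. unfold Cnorm2; nra. Qed.

Lemma Cnorm2_neq0 (z : Cplx) : z <> Czero -> Cnorm2 z <> 0.
Proof.
  destruct z as [a b]; unfold Cnorm2, Czero; simpl; intros Hz E; apply Hz.
  assert (a = 0) by nra; assert (b = 0) by nra; subst; reflexivity.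
Qed.

Lemma C_field_theory : field_theory Czero Cone Cadd Cmul Csub Copp Cdiv Cinv (@eq Cplx).
Proof.
  split; [split| | |];
    try (intros; apply C_ext; unfold Cadd, Cmul, Csub, Copp, Czero, Cone; simpl; ring).
  - unfold Cone, Czero; intro E; injection E; lra.
  - intros z Hz; apply Cnorm2_neq0 in Hz; unfold Cnorm2 in Hz.
    apply C_ext; unfold Cmul, Cinv, Cone; simpl; field; exact Hz.
Qed.
Add Field C_field : C_field_theory.

Lemma Cnorm_nonneg (z : Cplx) : 0 <= Cnorm z.
Proof. apply sqrt_pos. Qed.

Lemma Cnorm_sq (z : Cplx) : Cnorm z * Cnorm z = Cnorm2 z.
Proof. apply sqrt_sqrt, Cnorm2_nonneg. Qed.

Lemma Cnorm_of_Cnorm2 (z : Cplx) (b : R) : 0 <= b -> Cnorm2 z = b * b -> Cnorm z = b.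
Proof. intros Hb H; unfold Cnorm; fold (Cnorm2 z); rewrite H; apply sqrt_square, Hb. Qed.

Lemma Cnorm2_of_Cnorm (z : Cplx) (b : R) : Cnorm z = b -> Cnorm2 z = b * b.
Proof. intros <-; symmetry; apply Cnorm_sq. Qed.

Lemma Cnorm2_ge (z : Cplx) (b : R) : 0 <= b -> b <= Cnorm z -> b * b <= Cnorm2 z.
Proof. intros; rewrite <- Cnorm_sq; nra. Qed.

Lemma Cnorm_le_of_Cnorm2 (z : Cplx) (b : R) : 0 <= b -> Cnorm2 z <= b * b -> Cnorm z <= b.
Proof.
  intros Hb H; unfold Cnorm; fold (Cnorm2 z); rewrite <- (sqrt_square b Hb).
  apply sqrt_le_1_alt, H.
Qed.

Lemma Cnorm_mul (a b : Cplx) : Cnorm (Cmul a b) = Cnorm a * Cnorm b.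
Proof.
  unfold Cnorm; rewrite <- sqrt_mult by (apply Cnorm2_nonneg); f_equal.
  unfold Cmul; simpl; ring.
Qed.

Lemma Cnorm_conj (a : Cplx) : Cnorm (Cconj a) = Cnorm a.
Proof. unfold Cnorm, Cconj; simpl; f_equal; ring. Qed.

Lemma Cnorm_sub_sym (a b : Cplx) : Cnorm (Csub a b) = Cnorm (Csub b a).
Proof. unfold Cnorm, Csub; simpl; f_equal; ring. Qed.

Lemma Cnorm_zero : Cnorm Czero = 0.
Proof. unfold Cnorm, Czero; simpl; rewrite Rmult_0_l, Rplus_0_l; apply sqrt_0. Qed.

Lemma Cnorm_pos (a : Cplx) : a <> Czero -> 0 < Cnorm a.
Proof.
  intro Ha; apply Cnorm2_neq0 in Ha.
  pose proof (Cnorm_nonneg a); pose proof (Cnorm_sq a); nra.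
Qed.

Lemma Cneq0_of_Cnorm_pos (a : Cplx) : 0 < Cnorm a -> a <> Czero.
Proof. intros H ->; rewrite Cnorm_zero in H; lra. Qed.

Lemma Cnorm_triangle (a b : Cplx) : Cnorm (Cadd a b) <= Cnorm a + Cnorm b.
Proof.
  pose proof (Cnorm_nonneg a); pose proof (Cnorm_nonneg b).
  pose proof (Cnorm_sq a); pose proof (Cnorm_sq b).
  apply Cnorm_le_of_Cnorm2; [lra|].
  assert (CS : fst a * fst b + snd a * snd b <= Cnorm a * Cnorm b).
  { assert (Lag : (fst a * fst b + snd a * snd b) ^ 2 <= (Cnorm a * Cnorm b) ^ 2).
    { replace ((Cnorm a * Cnorm b) ^ 2) with (Cnorm2 a * Cnorm2 b) by nra.
      unfold Cnorm2; pose proof (Rle_0_sqr (fst a * snd b - snd a * fst b)).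
      unfold Rsqr in *; nra. }
    apply Rnot_lt_le; intro Hlt.
    assert (0 <= Cnorm a * Cnorm b) by (apply Rmult_le_pos; assumption).
    nra. }
  unfold Cnorm2, Cadd in *; simpl; nra.
Qed.

Lemma Cnorm_sub_le (a b : Cplx) : Cnorm (Csub a b) <= Cnorm a + Cnorm b.
Proof.
  replace (Csub a b) with (Cadd a (Copp b)) by ring.
  replace (Cnorm b) with (Cnorm (Copp b)) by (unfold Cnorm, Copp; simpl; f_equal; ring).
  apply Cnorm_triangle.
Qed.

Lemma Cnorm_rev (a b : Cplx) : Cnorm a - Cnorm b <= Cnorm (Csub a b).
Proof.
  pose proof (Cnorm_triangle (Csub a b) b) as H.
  replace (Cadd (Csub a b) b) with a in H by ring; lra.
Qed.

Lemma Cnorm_div (a b : Cplx) : b <> Czero -> Cnorm (Cdiv a b) = Cnorm a / Cnorm b.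
Proof.
  intro Hb; pose proof (Cnorm_pos b Hb).
  assert (E : Cnorm (Cdiv a b) * Cnorm b = Cnorm a)
    by (rewrite <- Cnorm_mul; f_equal; field; exact Hb).
  rewrite <- E; field; lra.
Qed.

(** * A criterion for a vanishing derivative *)

Lemma critical_of_linear_quotient (f : Cplx -> Cplx) (z : Cplx) (r C : R) : 0 < r ->
  (forall h, h <> Czero -> Cnorm h < r ->
     Cnorm (Cdiv (Csub (f (Cadd z h)) (f z)) h) <= C * Cnorm h) ->
  critical_point f z.
Proof.
  intros Hr Hq eps Heps.
  pose proof (Rabs_pos C) as HC.
  exists (Rmin r (eps / (Rabs C + 1))); split.
  { apply Rmin_pos; [exact Hr|]; apply Rdiv_lt_0_compat; lra. }
  intros h Hh Hlt.
  replace (Csub _ Czero) with (Cdiv (Csub (f (Cadd z h)) (f z)) h) by ring.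
  assert (Hr' : Cnorm h < r) by (eapply Rlt_le_trans; [exact Hlt| apply Rmin_l]).
  assert (He : Cnorm h * (Rabs C + 1) < eps).
  { assert (Cnorm h < eps / (Rabs C + 1)) by (eapply Rlt_le_trans; [exact Hlt| apply Rmin_r]).
    replace eps with (eps / (Rabs C + 1) * (Rabs C + 1)) by (field; lra).
    apply Rmult_lt_compat_r; lra. }
  specialize (Hq h Hh Hr').
  assert (C * Cnorm h <= Rabs C * Cnorm h)
    by (apply Rmult_le_compat_r; [apply Cnorm_nonneg| apply Rle_abs]).
  pose proof (Cnorm_nonneg h); nra.
Qed.

(** * The derivative of [B_{p,q}] *)

Definition Bnum (p q w : Cplx) : Cplx := Cmul w (Cmul (Csub w p) (Csub w q)).
Definition Bden (p q w : Cplx) : Cplx :=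
  Cmul (Csub Cone (Cmul (Cconj p) w)) (Csub Cone (Cmul (Cconj q) w)).

(* The numerator [N'D - ND'] of [B'], written in a form adapted to the unit circle. *)
Definition Bwronsk (p q z : Cplx) : Cplx :=
  Cadd (Cmul (Csub z p) (Cmul (Csub z q) (Bden p q z)))
  (Cadd (Cmul (Csub Cone (Cmul p (Cconj p)))
              (Cmul z (Cmul (Csub z q) (Csub Cone (Cmul (Cconj q) z)))))
        (Cmul (Csub Cone (Cmul q (Cconj q)))
              (Cmul z (Cmul (Csub z p) (Csub Cone (Cmul (Cconj p) z)))))).

Definition Bremainder (p q z h : Cplx) : Cplx :=
  Csub (Cmul (Csub (Cadd (Cadd z (Cadd z z)) h) (Cadd p q)) (Bden p q z))
       (Cmul (Bnum p q z) (Cmul (Cconj p) (Cconj q))).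

Lemma Bnum_Bden_increment (p q z h : Cplx) :
  Csub (Cmul (Bnum p q (Cadd z h)) (Bden p q z)) (Cmul (Bnum p q z) (Bden p q (Cadd z h)))
  = Cadd (Cmul h (Bwronsk p q z)) (Cmul (Cmul h h) (Bremainder p q z h)).
Proof.
  repeat match goal with x : Cplx |- _ => destruct x end.
  apply C_ext; unfold Bnum, Bden, Bwronsk, Bremainder, Cmul, Csub, Cadd, Cconj, Cone; simpl; ring.
Qed.

Lemma Blaschke_quotient (p q w : Cplx) :
  Bden p q w <> Czero -> Blaschke p q w = Cdiv (Bnum p q w) (Bden p q w).
Proof.
  intro Hd.
  assert (Hp : Csub Cone (Cmul (Cconj p) w) <> Czero)
    by (intro E; apply Hd; unfold Bden; rewrite E; ring).
  assert (Hq : Csub Cone (Cmul (Cconj q) w) <> Czero)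
    by (intro E; apply Hd; unfold Bden; rewrite E; ring).
  unfold Blaschke, Bnum, Bden; field; split; assumption.
Qed.

Lemma Blaschke_quotient_at_Bwronsk_zero (p q z h : Cplx) :
  h <> Czero -> Bwronsk p q z = Czero ->
  Bden p q z <> Czero -> Bden p q (Cadd z h) <> Czero ->
  Cdiv (Csub (Blaschke p q (Cadd z h)) (Blaschke p q z)) h =
  Cmul h (Cdiv (Bremainder p q z h) (Cmul (Bden p q (Cadd z h)) (Bden p q z))).
Proof.
  intros Hh HW Hz Hzh.
  rewrite !Blaschke_quotient by assumption.
  transitivity (Cdiv (Cdiv (Csub (Cmul (Bnum p q (Cadd z h)) (Bden p q z))
     (Cmul (Bnum p q z) (Bden p q (Cadd z h)))) (Cmul (Bden p q (Cadd z h)) (Bden p q z))) h).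
  { f_equal; field; split; assumption. }
  rewrite Bnum_Bden_increment, HW; field; repeat split; assumption.
Qed.

Lemma factor_on_circle (p z : Cplx) : Cnorm z = 1 ->
  Cnorm (Csub Cone (Cmul (Cconj p) z)) = Cnorm (Csub z p).
Proof.
  intro Hz; apply Cnorm2_of_Cnorm in Hz.
  unfold Cnorm; fold (Cnorm2 (Csub Cone (Cmul (Cconj p) z))) (Cnorm2 (Csub z p)); f_equal.
  assert (E : Cnorm2 (Csub Cone (Cmul (Cconj p) z)) - Cnorm2 (Csub z p)
              = (Cnorm2 p - 1) * (Cnorm2 z - 1))
    by (destruct p, z; unfold Cnorm2, Csub, Cmul, Cconj, Cone; simpl; ring).
  rewrite Hz in E; lra.
Qed.

Lemma factor_on_circle_pos (p z : Cplx) : Cnorm z = 1 -> Cnorm p <> 1 ->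
  0 < Cnorm (Csub Cone (Cmul (Cconj p) z)).
Proof.
  intros Hz Hp; rewrite factor_on_circle by exact Hz.
  pose proof (Cnorm_rev z p); pose proof (Cnorm_rev p z) as Hpz.
  rewrite Cnorm_sub_sym in Hpz.
  destruct (Rtotal_order (Cnorm p) 1) as [|[|]]; [lra| contradiction| lra].
Qed.

Lemma factor_near (p z h : Cplx) :
  Cnorm p * Cnorm h <= Cnorm (Csub Cone (Cmul (Cconj p) z)) / 2 ->
  Cnorm (Csub Cone (Cmul (Cconj p) z)) / 2 <= Cnorm (Csub Cone (Cmul (Cconj p) (Cadd z h))).
Proof.
  intro Hh.
  replace (Csub Cone (Cmul (Cconj p) (Cadd z h))) with
    (Csub (Csub Cone (Cmul (Cconj p) z)) (Cmul (Cconj p) h)) by ring.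
  pose proof (Cnorm_rev (Csub Cone (Cmul (Cconj p) z)) (Cmul (Cconj p) h)).
  rewrite Cnorm_mul, Cnorm_conj in *; lra.
Qed.

Lemma Bremainder_bound (p q z h : Cplx) : Cnorm h <= 1 ->
  Cnorm (Bremainder p q z h) <=
  (Cnorm (Csub (Cadd z (Cadd z z)) (Cadd p q)) + 1) * Cnorm (Bden p q z)
  + Cnorm (Bnum p q z) * (Cnorm p * Cnorm q).
Proof.
  intro Hh; unfold Bremainder.
  eapply Rle_trans; [apply Cnorm_sub_le|].
  rewrite !Cnorm_mul, !Cnorm_conj.
  replace (Csub (Cadd (Cadd z (Cadd z z)) h) (Cadd p q))
    with (Cadd (Csub (Cadd z (Cadd z z)) (Cadd p q)) h) by ring.
  pose proof (Cnorm_triangle (Csub (Cadd z (Cadd z z)) (Cadd p q)) h).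
  apply Rplus_le_compat_r, Rmult_le_compat_r; [apply Cnorm_nonneg| lra].
Qed.

Lemma mul_le_half_of_lt (P x a : R) : 0 <= P -> 0 <= x -> x < a / (2 * (P + 1)) -> P * x <= a / 2.
Proof.
  intros HP Hx0 Hx; assert (Hx' : x * (2 * (P + 1)) < a).
  { replace a with (a / (2 * (P + 1)) * (2 * (P + 1))) by (field; lra).
    apply Rmult_lt_compat_r; lra. }
  nra.
Qed.

Lemma Bden_lower_bound_near (p q z h : Cplx) :
  0 <= Cnorm h ->
  Cnorm h < Cnorm (Csub Cone (Cmul (Cconj p) z)) / (2 * (Cnorm p + 1)) ->
  Cnorm h < Cnorm (Csub Cone (Cmul (Cconj q) z)) / (2 * (Cnorm q + 1)) ->
  Cnorm (Csub Cone (Cmul (Cconj p) z)) / 2 * (Cnorm (Csub Cone (Cmul (Cconj q) z)) / 2)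
  <= Cnorm (Bden p q (Cadd z h)).
Proof.
  intros Hh Hp Hq; unfold Bden; rewrite Cnorm_mul.
  pose proof (Cnorm_nonneg (Csub Cone (Cmul (Cconj p) z))).
  pose proof (Cnorm_nonneg (Csub Cone (Cmul (Cconj q) z))).
  apply Rmult_le_compat; try lra;
    apply factor_near, mul_le_half_of_lt; try assumption; apply Cnorm_nonneg.
Qed.

Lemma critical_of_Bwronsk_zero (p q z : Cplx) :
  Cnorm z = 1 -> Cnorm p <> 1 -> Cnorm q <> 1 -> Bwronsk p q z = Czero ->
  critical_point (Blaschke p q) z.
Proof.
  intros Hz Hp Hq HW.
  set (a := Cnorm (Csub Cone (Cmul (Cconj p) z))).
  set (b := Cnorm (Csub Cone (Cmul (Cconj q) z))).
  assert (Ha : 0 < a) by (apply factor_on_circle_pos; assumption).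
  assert (Hb : 0 < b) by (apply factor_on_circle_pos; assumption).
  assert (HDz : Cnorm (Bden p q z) = a * b) by (unfold Bden; rewrite Cnorm_mul; reflexivity).
  set (Sb := (Cnorm (Csub (Cadd z (Cadd z z)) (Cadd p q)) + 1) * (a * b)
             + Cnorm (Bnum p q z) * (Cnorm p * Cnorm q)).
  apply (critical_of_linear_quotient _ _
           (Rmin 1 (Rmin (a / (2 * (Cnorm p + 1))) (b / (2 * (Cnorm q + 1)))))
           (Sb / (a / 2 * (b / 2) * (a * b)))).
  { pose proof (Cnorm_nonneg p); pose proof (Cnorm_nonneg q).
    repeat apply Rmin_pos; try lra; apply Rdiv_lt_0_compat; lra. }
  intros h Hh Hr.
  pose proof (Cnorm_nonneg h).
  assert (Hr1 : Cnorm h <= 1) by (apply Rlt_le, (Rlt_le_trans _ _ _ Hr), Rmin_l).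
  assert (Hra : Cnorm h < a / (2 * (Cnorm p + 1)))
    by (apply (Rlt_le_trans _ _ _ Hr); eapply Rle_trans; [apply Rmin_r| apply Rmin_l]).
  assert (Hrb : Cnorm h < b / (2 * (Cnorm q + 1)))
    by (apply (Rlt_le_trans _ _ _ Hr); eapply Rle_trans; apply Rmin_r).
  assert (HDzh : a / 2 * (b / 2) <= Cnorm (Bden p q (Cadd z h)))
    by (apply Bden_lower_bound_near; assumption).
  assert (HS : Cnorm (Bremainder p q z h) <= Sb)
    by (unfold Sb; rewrite <- HDz; apply Bremainder_bound, Hr1).
  assert (Hab : 0 < a / 2 * (b / 2)) by (apply Rmult_lt_0_compat; lra).
  assert (HDz0 : Bden p q z <> Czero)
    by (apply Cneq0_of_Cnorm_pos; rewrite HDz; apply Rmult_lt_0_compat; lra).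
  assert (HDzh0 : Bden p q (Cadd z h) <> Czero) by (apply Cneq0_of_Cnorm_pos; lra).
  rewrite Blaschke_quotient_at_Bwronsk_zero by assumption.
  rewrite Cnorm_mul, Cnorm_div, Cnorm_mul, HDz by (apply Cneq0_of_Cnorm_pos;
    rewrite Cnorm_mul, HDz; apply Rmult_lt_0_compat; nra).
  rewrite Rmult_comm; apply Rmult_le_compat_r; [assumption|].
  unfold Rdiv; apply Rmult_le_compat; try lra.
  - apply Cnorm_nonneg.
  - apply Rlt_le, Rinv_0_lt_compat; apply Rmult_lt_0_compat; nra.
  - apply Rinv_le_contravar; [apply Rmult_lt_0_compat; nra|].
    apply Rmult_le_compat_r; nra.
Qed.

(** * The real form of [Bwronsk] on the unit circle *)

Definition Phi (p q z : Cplx) : R :=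
  Cnorm2 (Csub z p) * Cnorm2 (Csub z q)
  + (1 - Cnorm2 p) * Cnorm2 (Csub z q) + (1 - Cnorm2 q) * Cnorm2 (Csub z p).

(* On the unit circle [conj z = 1/z], which turns [Bwronsk] into [z^2 Phi]. *)
Lemma Bwronsk_on_circle (p q z : Cplx) :
  Cnorm2 z = 1 -> Bwronsk p q z = Cmul (Cmul z z) (Phi p q z, 0).
Proof.
  destruct p as [p1 p2], q as [q1 q2], z as [x y]; unfold Cnorm2; simpl; intro Hz.
  apply C_ext; unfold Bwronsk, Bden, Phi, Cnorm2, Cmul, Csub, Cadd, Cconj, Cone; simpl; nsatz.
Qed.

Lemma critical_of_Phi_zero (p q z : Cplx) :
  Cnorm z = 1 -> Cnorm p <> 1 -> Cnorm q <> 1 -> Phi p q z = 0 ->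
  critical_point (Blaschke p q) z.
Proof.
  intros Hz Hp Hq H0; apply critical_of_Bwronsk_zero; try assumption.
  rewrite Bwronsk_on_circle, H0 by (apply Cnorm2_of_Cnorm in Hz; lra).
  apply C_ext; unfold Cmul, Czero; simpl; ring.
Qed.

(** * Two sign changes of [Phi] give two critical points *)

Definition ecirc (t : R) : Cplx := (cos t, sin t).

Lemma Cnorm2_ecirc (t : R) : Cnorm2 (ecirc t) = 1.
Proof. unfold Cnorm2, ecirc; simpl; pose proof (sin2_cos2 t); unfold Rsqr in *; lra. Qed.

Lemma Cnorm_ecirc (t : R) : Cnorm (ecirc t) = 1.
Proof. apply Cnorm_of_Cnorm2; [lra|]; rewrite Cnorm2_ecirc; ring. Qed.

Lemma ecirc_periodic (t : R) : ecirc (t + 2 * PI) = ecirc t.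
Proof.
  unfold ecirc; pose proof (sin_period t 1); pose proof (cos_period t 1).
  simpl INR in *; rewrite Rmult_1_r in *; congruence.
Qed.

Lemma ecirc_inj (t1 t2 : R) : 0 < t2 - t1 < 2 * PI -> ecirc t1 <> ecirc t2.
Proof.
  intros H E; unfold ecirc in E; injection E as E1 E2.
  pose proof (cos_minus t2 t1) as C; rewrite <- E1, <- E2 in C.
  pose proof (sin2_cos2 t1); unfold Rsqr in *.
  pose proof (cos_2a_sin ((t2 - t1) / 2)) as D.
  replace (2 * ((t2 - t1) / 2)) with (t2 - t1) in D by field.
  assert (0 < sin ((t2 - t1) / 2)) by (apply sin_gt_0; lra).
  nra.
Qed.

Lemma ecirc_surj (z : Cplx) : Cnorm2 z = 1 -> exists t, -PI <= t <= PI /\ ecirc t = z.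
Proof.
  destruct z as [x y]; unfold Cnorm2; simpl; intro H.
  assert (Hx : -1 <= x <= 1) by (split; nra).
  assert (Hs : sin (acos x) = Rabs y).
  { rewrite sin_acos by exact Hx; rewrite <- sqrt_Rsqr_abs; f_equal; unfold Rsqr; lra. }
  pose proof (acos_bound x).
  destruct (Rle_or_lt 0 y).
  - exists (acos x); split; [lra|].
    unfold ecirc; rewrite cos_acos, Hs, Rabs_right by lra; reflexivity.
  - exists (- acos x); split; [lra|].
    unfold ecirc; rewrite cos_neg, sin_neg, cos_acos, Hs, Rabs_left by lra.
    f_equal; ring.
Qed.

Lemma Phi_ecirc_continuous (p q : Cplx) : continuity (fun t => Phi p q (ecirc t)).
Proof. unfold Phi, Cnorm2, ecirc, Csub; simpl; reg. Qed.

Lemma periodic_two_zeros (f : R -> R) (a b : R) : continuity f ->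
  a < b < a + 2 * PI -> f a < 0 -> 0 < f b -> f (a + 2 * PI) = f a ->
  exists t1 t2, f t1 = 0 /\ f t2 = 0 /\ a < t1 < b /\ b < t2 < a + 2 * PI.
Proof.
  intros Hc Hab Ha Hb Hp.
  destruct (IVT f a b Hc ltac:(lra) Ha Hb) as [t1 [I1 Z1]].
  destruct (IVT (fun x => - f x) b (a + 2 * PI) (continuity_opp f Hc)
              ltac:(lra) ltac:(lra) ltac:(lra)) as [t2 [I2 Z2]].
  assert (t1 <> a) by (intros ->; lra); assert (t1 <> b) by (intros ->; lra).
  assert (t2 <> b) by (intros ->; lra); assert (t2 <> a + 2 * PI) by (intros ->; lra).
  exists t1, t2; repeat split; lra.
Qed.

Lemma two_critical_points_of_sign_change (p q zn zp : Cplx) :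
  Cnorm p <> 1 -> Cnorm q <> 1 -> Cnorm2 zn = 1 -> Cnorm2 zp = 1 ->
  Phi p q zn < 0 -> 0 < Phi p q zp ->
  exists z1 z2 : Cplx, z1 <> z2 /\ Cnorm z1 = 1 /\ Cnorm z2 = 1 /\
    critical_point (Blaschke p q) z1 /\ critical_point (Blaschke p q) z2.
Proof.
  intros Hp Hq Hn Hpn Fn Fp.
  destruct (ecirc_surj zn Hn) as [tn [Btn <-]].
  destruct (ecirc_surj zp Hpn) as [tp [Btp <-]].
  set (f := fun t => Phi p q (ecirc t)).
  assert (Hper : forall t, f (t + 2 * PI) = f t)
    by (intro; unfold f; rewrite ecirc_periodic; reflexivity).
  fold (f tn) in Fn; fold (f tp) in Fp.
  assert (Hb : exists b, tn < b < tn + 2 * PI /\ 0 < f b).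
  { destruct (Rtotal_order tn tp) as [Hlt|[<-|Hgt]]; [| lra|].
    - exists tp; repeat split; try assumption.
      destruct (Req_dec tp (tn + 2 * PI)) as [E|]; [rewrite E, Hper in Fp; lra| lra].
    - exists (tp + 2 * PI); rewrite Hper; repeat split; try lra.
      destruct (Req_dec tn (tp + 2 * PI)) as [E|]; [rewrite E, Hper in Fn; lra| lra]. }
  destruct Hb as [b [Hb Fb]].
  destruct (periodic_two_zeros f tn b (Phi_ecirc_continuous p q) Hb Fn Fb (Hper tn))
    as [t1 [t2 [Z1 [Z2 [I1 I2]]]]].
  exists (ecirc t1), (ecirc t2); repeat split.
  - apply ecirc_inj; lra.
  - apply Cnorm_ecirc.
  - apply Cnorm_ecirc.
  - apply critical_of_Phi_zero; [apply Cnorm_ecirc| assumption| assumption| exact Z1].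
  - apply critical_of_Phi_zero; [apply Cnorm_ecirc| assumption| assumption| exact Z2].
Qed.

(** * A compact set avoiding the unit circle stays away from it *)

Definition free_radius (K : Cplx -> Prop) (t r : R) : Prop :=
  0 <= r <= 1 /\ forall w, Cnorm (Csub w (ecirc t)) < r -> ~ K w.

Lemma free_radius_bound (K : Cplx -> Prop) (t : R) : bound (free_radius K t).
Proof. exists 1; intros r [H _]; lra. Qed.

Lemma free_radius_zero (K : Cplx -> Prop) (t : R) : free_radius K t 0.
Proof. split; [lra|]; intros w H; pose proof (Cnorm_nonneg (Csub w (ecirc t))); lra. Qed.

(* The largest free radius, capped at 1: the distance from [ecirc t] to [K] if [<= 1]. *)
Definition gap (K : Cplx -> Prop) (t : R) : R :=
  proj1_sig (completeness (free_radius K t) (free_radius_bound K t)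
               (ex_intro _ 0 (free_radius_zero K t))).

Lemma gap_ub (K : Cplx -> Prop) (t r : R) : free_radius K t r -> r <= gap K t.
Proof. intro Hr; exact (proj1 (proj2_sig (completeness _ _ _)) r Hr). Qed.

Lemma gap_lub (K : Cplx -> Prop) (t u : R) :
  (forall r, free_radius K t r -> r <= u) -> gap K t <= u.
Proof. intro Hu; exact (proj2 (proj2_sig (completeness _ _ _)) u Hu). Qed.

Lemma gap_le1 (K : Cplx -> Prop) (t : R) : gap K t <= 1.
Proof. apply gap_lub; intros r [H _]; lra. Qed.

Lemma gap_le_dist (K : Cplx -> Prop) (t : R) (z : Cplx) :
  K z -> gap K t <= Cnorm (Csub z (ecirc t)).
Proof.
  intro Kz; apply gap_lub; intros r [_ Hr].
  destruct (Rle_or_lt r (Cnorm (Csub z (ecirc t)))) as [|Hlt]; [assumption|].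
  exfalso; exact (Hr z Hlt Kz).
Qed.

Lemma gap_pos (K : Cplx -> Prop) (t : R) : Cclosed K -> ~ K (ecirc t) -> 0 < gap K t.
Proof.
  intros Hcl Ht; destruct (Hcl _ Ht) as [r [Hr Hfree]].
  apply Rlt_le_trans with (Rmin r 1); [apply Rmin_pos; lra|].
  apply gap_ub; split; [split; [apply Rlt_le, Rmin_pos; lra| apply Rmin_r]|].
  intros w Hw; apply Hfree, (Rlt_le_trans _ _ _ Hw), Rmin_l.
Qed.

Lemma gap_lipschitz (K : Cplx -> Prop) (t s : R) :
  gap K t <= gap K s + Cnorm (Csub (ecirc t) (ecirc s)).
Proof.
  set (d := Cnorm (Csub (ecirc t) (ecirc s))).
  assert (Hd : 0 <= d) by apply Cnorm_nonneg.
  apply gap_lub; intros r [Hr HK].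
  destruct (Rle_or_lt r d).
  { pose proof (gap_ub K s 0 (free_radius_zero K s)); lra. }
  enough (r - d <= gap K s) by lra.
  apply gap_ub; split; [lra|]; intros w Hw; apply HK.
  replace (Csub w (ecirc t)) with (Cadd (Csub w (ecirc s)) (Csub (ecirc s) (ecirc t))) by ring.
  eapply Rle_lt_trans; [apply Cnorm_triangle|].
  rewrite (Cnorm_sub_sym (ecirc s) (ecirc t)); fold d; lra.
Qed.

Lemma gap_continuous (K : Cplx -> Prop) (t : R) : continuity_pt (gap K) t.
Proof.
  assert (Hd : continuity_pt (fun s => Cnorm (Csub (ecirc t) (ecirc s))) t).
  { unfold Cnorm, ecirc, Csub; simpl.
    apply (continuity_pt_comp (fun s => (cos t - cos s) * (cos t - cos s)
                                        + (sin t - sin s) * (sin t - sin s)) sqrt).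
    - reg.
    - apply continuity_pt_sqrt; nra. }
  unfold continuity_pt, continue_in, limit1_in, limit_in in *.
  intros eps Heps; destruct (Hd eps Heps) as [alp [Ha Hx]].
  exists alp; split; [exact Ha|]; intros x Hx'; specialize (Hx x Hx').
  simpl in *; unfold R_dist in *.
  replace (Cnorm (Csub (ecirc t) (ecirc t))) with 0 in Hx
    by (replace (Csub (ecirc t) (ecirc t)) with Czero by ring; symmetry; apply Cnorm_zero).
  rewrite Rminus_0_r, Rabs_right in Hx by apply Rle_ge, Cnorm_nonneg.
  pose proof (gap_lipschitz K t x); pose proof (gap_lipschitz K x t) as Hxt.
  rewrite Cnorm_sub_sym in Hxt; apply Rabs_def1; lra.
Qed.

Lemma compact_away_from_circle (K : Cplx -> Prop) :
  Ccompact K -> (forall z, K z -> Cnorm z <> 1) ->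
  exists m, 0 < m /\ m <= 1 /\ forall z, K z -> m <= Rabs (Cnorm z - 1).
Proof.
  intros [Hcl _] Hc; pose proof PI_RGT_0.
  destruct (continuity_ab_min (gap K) (-PI) PI ltac:(lra) (fun c _ => gap_continuous K c))
    as [tm [Hmin _]].
  exists (gap K tm); split; [|split; [apply gap_le1|]].
  { apply gap_pos; [exact Hcl|]; intro HK; apply (Hc _ HK), Cnorm_ecirc. }
  intros z Kz; set (N := Cnorm z).
  destruct (Req_dec N 0) as [HN0|HN0].
  { rewrite HN0, Rminus_0_l, Rabs_Ropp, Rabs_R1; apply gap_le1. }
  assert (HN : 0 < N) by (pose proof (Cnorm_nonneg z); unfold N in *; lra).
  (* the radial projection [z / |z|] is the nearest point of the circle *)
  assert (Hu : Cnorm2 (fst z / N, snd z / N) = 1).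
  { pose proof (Cnorm_sq z) as Hz; fold N in Hz; unfold Cnorm2 in *; simpl.
    replace (fst z / N * (fst z / N) + snd z / N * (snd z / N))
      with ((fst z * fst z + snd z * snd z) / (N * N)) by (field; lra).
    rewrite <- Hz; field; lra. }
  destruct (ecirc_surj _ Hu) as [t [Bt Et]].
  assert (Hd : Cnorm (Csub z (ecirc t)) = Rabs (N - 1)).
  { rewrite Et, <- sqrt_Rsqr_abs; unfold Cnorm; f_equal.
    pose proof (Cnorm_sq z) as Hz; fold N in Hz; unfold Cnorm2, Csub, Rsqr in *; simpl.
    replace ((fst z - fst z / N) * (fst z - fst z / N) + (snd z - snd z / N) * (snd z - snd z / N))
      with ((fst z * fst z + snd z * snd z) * ((N - 1) / N) * ((N - 1) / N)) by (field; lra).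
    rewrite <- Hz; field; lra. }
  rewrite <- Hd; eapply Rle_trans; [apply Hmin, Bt| apply gap_le_dist, Kz].
Qed.

(** * Explicit points where [Phi] is negative or positive *)

(* [circ_point p c s] is the point of the unit circle making the angle with cosine [c]
   and sine [s] with the direction of [p]. *)
Definition circ_point (p : Cplx) (c s : R) : Cplx :=
  Cmul (fst p / Cnorm p, snd p / Cnorm p) (c, s).

Lemma circ_point_on_circle (p : Cplx) (c s : R) : 0 < Cnorm p -> c * c + s * s = 1 ->
  Cnorm2 (circ_point p c s) = 1.
Proof.
  intros HP Hcs; pose proof (Cnorm_sq p) as HN; unfold circ_point, Cnorm2, Cmul in *; simpl.
  set (P := Cnorm p) in *; destruct p as [a b]; simpl in *.
  transitivity ((a * a + b * b) / (P * P) * (c * c + s * s)); [field; lra|].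
  rewrite Hcs, <- HN; field; lra.
Qed.

Lemma circ_point_dist (p : Cplx) (c s : R) : 0 < Cnorm p -> c * c + s * s = 1 ->
  Cnorm2 (Csub (circ_point p c s) p) = 1 + Cnorm p * Cnorm p - 2 * c * Cnorm p.
Proof.
  intros HP Hcs; pose proof (Cnorm_sq p) as HN; unfold circ_point, Cnorm2, Cmul, Csub in *; simpl.
  set (P := Cnorm p) in *; destruct p as [a b]; simpl in *.
  transitivity ((a * a + b * b) / (P * P) * (c * c + s * s) - 2 * c * (a * a + b * b) / P
                + (a * a + b * b)); [field; lra|].
  rewrite Hcs, <- HN; field; lra.
Qed.

Lemma circ_point_mirror_dist (p : Cplx) (c s : R) : 0 < Cnorm p ->
  Cnorm2 (Csub (circ_point p c s) (circ_point p c (- s))) = 4 * (s * s).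
Proof.
  intros HP; pose proof (Cnorm_sq p) as HN; unfold circ_point, Cnorm2, Cmul, Csub in *; simpl.
  set (P := Cnorm p) in *; destruct p as [a b]; simpl in *.
  transitivity (4 * (s * s) * ((a * a + b * b) / (P * P))); [field; lra|].
  rewrite <- HN; field; lra.
Qed.

Lemma dist_from_circle (z w : Cplx) : Cnorm2 z = 1 ->
  (Cnorm w - 1) * (Cnorm w - 1) <= Cnorm2 (Csub z w).
Proof.
  intro Hz; assert (Hz1 : Cnorm z = 1) by (apply Cnorm_of_Cnorm2; lra).
  pose proof (Cnorm_rev z w); pose proof (Cnorm_rev w z) as Hwz.
  rewrite Cnorm_sub_sym in Hwz; rewrite <- Cnorm_sq.
  pose proof (Cnorm_nonneg (Csub z w)); nra.
Qed.

(* Case [|q| <= 1 - m] and [p] just outside the circle: [Phi] is negative in the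
   direction of [p] and positive in the opposite direction. *)
Lemma Phi_signs_p_near_circle (p q : Cplx) (m : R) :
  0 < m -> Cnorm q <= 1 - m -> 1 < Cnorm p -> Cnorm p - 1 < m * m ->
  exists zn zp, Cnorm2 zn = 1 /\ Cnorm2 zp = 1 /\ Phi p q zn < 0 /\ 0 < Phi p q zp.
Proof.
  intros Hm HQ HP He.
  set (P := Cnorm p) in *; set (Q := Cnorm q) in *.
  assert (0 <= Q) by apply Cnorm_nonneg.
  assert (HP0 : 0 < P) by lra.
  assert (Hnp : Cnorm2 p = P * P) by (symmetry; apply Cnorm_sq).
  assert (Hnq : Cnorm2 q = Q * Q) by (symmetry; apply Cnorm_sq).
  assert (U1 : Cnorm2 (circ_point p 1 0) = 1) by (apply circ_point_on_circle; [exact HP0| ring]).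
  assert (U2 : Cnorm2 (circ_point p (-1) 0) = 1) by (apply circ_point_on_circle; [exact HP0| ring]).
  exists (circ_point p 1 0), (circ_point p (-1) 0); repeat split; try assumption.
  - pose proof (dist_from_circle _ q U1) as HX; fold Q in HX.
    set (X := Cnorm2 (Csub (circ_point p 1 0) q)) in *.
    unfold Phi; rewrite circ_point_dist by (exact HP0 || ring); fold P X; rewrite Hnp, Hnq.
    (* [Phi = (P - 1) ((1 - Q^2)(P - 1) - 2 X)] with [X >= (1 - Q)^2 >= m^2] *)
    replace ((1 + P * P - 2 * 1 * P) * X + (1 - P * P) * X + (1 - Q * Q) * (1 + P * P - 2 * 1 * P))
      with ((P - 1) * ((1 - Q * Q) * (P - 1) - 2 * X)) by ring.
    assert ((1 - Q * Q) * (P - 1) - 2 * X < 0) by nra.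
    nra.
  - set (Y := Cnorm2 (Csub (circ_point p (-1) 0) q)).
    assert (0 <= Y) by apply Cnorm2_nonneg.
    unfold Phi; rewrite circ_point_dist by (exact HP0 || ring); fold P Y; rewrite Hnp, Hnq.
    replace ((1 + P * P - 2 * -1 * P) * Y + (1 - P * P) * Y + (1 - Q * Q) * (1 + P * P - 2 * -1 * P))
      with ((P + 1) * (2 * Y + (1 - Q * Q) * (P + 1))) by ring.
    assert (0 < 1 - Q * Q) by nra.
    apply Rmult_lt_0_compat; nra.
Qed.

(* Case [1 + m <= |p| <= M] and [q] just inside the circle: [Phi] is positive in the
   direction of [q]. *)
Lemma Phi_pos_toward_q (p q : Cplx) (m M : R) :
  0 < m -> 1 + m <= Cnorm p -> Cnorm p <= M -> Cnorm q < 1 ->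
  (1 - Cnorm q) * (4 * (M * M)) < m * m ->
  exists zp, Cnorm2 zp = 1 /\ 0 < Phi p q zp.
Proof.
  intros Hm HP1 HP2 HQ He.
  set (P := Cnorm p) in *; set (Q := Cnorm q) in *; set (eps := 1 - Q) in *.
  assert (HmM : m * m <= M * M) by nra.
  assert (HQ0 : 0 < Q).
  { apply Rnot_le_lt; intro HQle.
    assert (4 * (M * M) <= (1 - Q) * (4 * (M * M))).
    { rewrite <- (Rmult_1_l (4 * (M * M))) at 1; apply Rmult_le_compat_r; nra. }
    unfold eps in He; nra. }
  assert (Hnp : Cnorm2 p = P * P) by (symmetry; apply Cnorm_sq).
  assert (Hnq : Cnorm2 q = Q * Q) by (symmetry; apply Cnorm_sq).
  assert (U : Cnorm2 (circ_point q 1 0) = 1) by (apply circ_point_on_circle; [exact HQ0| ring]).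
  exists (circ_point q 1 0); split; [exact U|].
  pose proof (dist_from_circle _ p U) as HZ; fold P in HZ.
  set (Z := Cnorm2 (Csub (circ_point q 1 0) p)) in *.
  unfold Phi; rewrite circ_point_dist by (exact HQ0 || ring); fold Q Z; rewrite Hnp, Hnq.
  (* [Phi = eps (2 Z - eps (P^2 - 1))] with [Z >= (P - 1)^2 >= m^2 > eps (P^2 - 1)] *)
  replace (Z * (1 + Q * Q - 2 * 1 * Q) + (1 - P * P) * (1 + Q * Q - 2 * 1 * Q) + (1 - Q * Q) * Z)
    with (eps * (2 * Z - eps * (P * P - 1))) by (unfold eps; ring).
  assert (0 < eps) by (unfold eps; lra).
  assert (P * P - 1 <= 4 * (M * M)) by nra.
  assert (eps * (P * P - 1) <= eps * (4 * (M * M))) by (apply Rmult_le_compat_l; lra).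
  apply Rmult_lt_0_compat; nra.
Qed.

Lemma circ_point_far_from (p w : Cplx) (c s : R) : 0 < Cnorm p -> 0 <= s ->
  exists s', s' * s' = s * s /\ s * s <= Cnorm2 (Csub (circ_point p c s') w).
Proof.
  intros HP Hs.
  assert (Hsep : 2 * s <= Cnorm (Csub (circ_point p c s) w) + Cnorm (Csub (circ_point p c (- s)) w)).
  { replace (2 * s) with (Cnorm (Csub (circ_point p c s) (circ_point p c (- s)))).
    2: { apply Cnorm_of_Cnorm2; [lra|]; rewrite circ_point_mirror_dist by exact HP; ring. }
    replace (Csub (circ_point p c s) (circ_point p c (- s)))
      with (Csub (Csub (circ_point p c s) w) (Csub (circ_point p c (- s)) w)) by ring.
    apply Cnorm_sub_le. }
  destruct (Rle_or_lt s (Cnorm (Csub (circ_point p c s) w))).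
  - exists s; split; [reflexivity| apply Cnorm2_ge; assumption].
  - exists (- s); split; [ring| apply Cnorm2_ge; lra].
Qed.

(* [Phi] is negative at a point [z] of the circle with [|z - p|^2 = |p|^2 - |p|] as soon
   as [z] is far enough from [q]: there [Phi = (|p| - 1)((1 - |q|^2)|p| - |z - q|^2)]. *)
Lemma Phi_neg_at_mid_distance (p q z : Cplx) : 1 < Cnorm p ->
  Cnorm2 (Csub z p) = Cnorm p * Cnorm p - Cnorm p ->
  (1 - Cnorm2 q) * Cnorm p < Cnorm2 (Csub z q) -> Phi p q z < 0.
Proof.
  intros HP Dz HX; unfold Phi; rewrite Dz, <- (Cnorm_sq p).
  replace ((Cnorm p * Cnorm p - Cnorm p) * Cnorm2 (Csub z q)
           + (1 - Cnorm p * Cnorm p) * Cnorm2 (Csub z q)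
           + (1 - Cnorm2 q) * (Cnorm p * Cnorm p - Cnorm p))
    with ((Cnorm p - 1) * ((1 - Cnorm2 q) * Cnorm p - Cnorm2 (Csub z q))) by ring.
  apply Rmult_pos_neg; lra.
Qed.

(* In the same case [Phi] is negative at one of the two points [z] of the circle with
   [|z - p|^2 = |p|^2 - |p|], namely at angle [acos c] with [c = (1 + 1/|p|)/2]. *)
Lemma Phi_neg_somewhere (p q : Cplx) (m M : R) :
  0 < m -> m <= 1 -> 1 + m <= Cnorm p -> Cnorm p <= M -> Cnorm q < 1 ->
  (1 - Cnorm q) * (4 * (M * M)) < m * m ->
  exists zn, Cnorm2 zn = 1 /\ Phi p q zn < 0.
Proof.
  intros Hm Hm1 HP1 HP2 HQ He.
  set (P := Cnorm p) in *; set (Q := Cnorm q) in *; set (eps := 1 - Q) in *.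
  assert (HQ0 : 0 <= Q) by apply Cnorm_nonneg.
  set (c := (1 + / P) / 2).
  assert (HcP : c * P = (P + 1) / 2) by (unfold c; field; lra).
  assert (Hc : 0 <= c <= 1) by (split; nra).
  set (s := sqrt (1 - c * c)).
  assert (Hs0 : 0 <= s) by apply sqrt_pos.
  assert (Hss : s * s = 1 - c * c) by (apply sqrt_sqrt; nra).
  (* [s^2 >= 1 - c = (P - 1) / (2 P) >= m / (2 M)] *)
  assert (Hs2 : m / (2 * M) <= s * s).
  { assert (E : 1 - c = (P - 1) / (2 * P)) by (unfold c; field; lra).
    assert (m / (2 * M) <= (P - 1) / (2 * P)).
    { unfold Rdiv; apply Rmult_le_compat; try lra.
      - apply Rlt_le, Rinv_0_lt_compat; lra.
      - apply Rinv_le_contravar; lra. }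
    nra. }
  (* [(1 - Q^2) P <= 2 eps M < m / (2 M) <= s^2] *)
  assert (Hfar : (1 - Q * Q) * P < s * s).
  { assert (0 <= 1 - Q * Q <= 2 * eps) by (unfold eps; split; nra).
    assert ((1 - Q * Q) * P <= 2 * eps * M) by (apply Rmult_le_compat; lra).
    assert (m / (2 * M) * (2 * M) = m) by (field; lra).
    assert (2 * eps * M < m / (2 * M)) by nra.
    lra. }
  destruct (circ_point_far_from p q c s ltac:(fold P; lra) Hs0) as [s' [Es' Hs']].
  assert (Hcs : c * c + s' * s' = 1) by (rewrite Es', Hss; ring).
  exists (circ_point p c s'); split; [apply circ_point_on_circle; [fold P; lra| exact Hcs]|].
  apply Phi_neg_at_mid_distance; fold P; [lra| |].
  - rewrite circ_point_dist by ((fold P; lra) || exact Hcs); fold P.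
    rewrite Rmult_assoc, HcP; lra.
  - rewrite <- (Cnorm_sq q); fold Q; lra.
Qed.

Lemma Phi_signs_q_near_circle (p q : Cplx) (m M : R) :
  0 < m -> m <= 1 -> 1 + m <= Cnorm p -> Cnorm p <= M -> Cnorm q < 1 ->
  (1 - Cnorm q) * (4 * (M * M)) < m * m ->
  exists zn zp, Cnorm2 zn = 1 /\ Cnorm2 zp = 1 /\ Phi p q zn < 0 /\ 0 < Phi p q zp.
Proof.
  intros.
  destruct (Phi_neg_somewhere p q m M) as [zn [Hzn Fzn]]; try assumption.
  destruct (Phi_pos_toward_q p q m M) as [zp [Hzp Fzp]]; try assumption.
  exists zn, zp; repeat split; assumption.
Qed.

(* With [m] the separation of [K] from the circle and [M >= 1] a bound on [K], the
   choice [delta = m^2 / (4 M^2)] works: in case (1) [Phi_signs_q_near_circle] applies,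
   in case (2) [Phi_signs_p_near_circle] does. *)
Theorem mainTheorem13 (K : Cplx -> Prop) :
  Ccompact K -> (forall z, K z -> Cnorm z <> 1) ->
  exists delta, 0 < delta /\
    forall p q : Cplx,
      ((K p /\ 1 < Cnorm p /\ Cnorm q < 1 /\ dist_circle q < delta) \/
       (K q /\ Cnorm q < 1 /\ 1 < Cnorm p /\ dist_circle p < delta)) ->
      exists z1 z2 : Cplx, z1 <> z2 /\ Cnorm z1 = 1 /\ Cnorm z2 = 1 /\
        critical_point (Blaschke p q) z1 /\ critical_point (Blaschke p q) z2.
Proof.
  intros Hcomp Hc.
  destruct (compact_away_from_circle K Hcomp Hc) as [m [Hm [Hm1 Hsep]]].
  destruct Hcomp as [_ [M0 HM0]].
  set (M := Rmax M0 1); assert (HM0M : M0 <= M) by apply Rmax_l.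
  assert (HM : 1 <= M) by apply Rmax_r.
  assert (HM4 : 0 < 4 * (M * M)) by nra.
  exists (m * m / (4 * (M * M))); split; [apply Rdiv_lt_0_compat; nra|].
  assert (Hdelta : forall x, x < m * m / (4 * (M * M)) -> x * (4 * (M * M)) < m * m).
  { intros x Hx; replace (m * m) with (m * m / (4 * (M * M)) * (4 * (M * M))) by (field; lra).
    apply Rmult_lt_compat_r; lra. }
  intros p q [[Kp [HP [HQ Hd]]] | [Kq [HQ [HP Hd]]]]; unfold dist_circle in Hd.
  - pose proof (Hsep p Kp) as Hmp; pose proof (HM0 p Kp).
    rewrite Rabs_right in Hmp by lra; rewrite Rabs_left in Hd by lra.
    destruct (Phi_signs_q_near_circle p q m M) as [zn [zp [Hzn [Hzp [Fn Fp]]]]];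
      try lra; [apply Hdelta; lra|].
    apply (two_critical_points_of_sign_change p q zn zp); try assumption; intro; lra.
  - pose proof (Hsep q Kq) as Hmq.
    rewrite Rabs_left in Hmq by lra; rewrite Rabs_right in Hd by lra.
    apply Hdelta in Hd.
    assert (Cnorm p - 1 <= (Cnorm p - 1) * (4 * (M * M)))
      by (rewrite <- (Rmult_1_r (Cnorm p - 1)) at 1; apply Rmult_le_compat_l; nra).
    destruct (Phi_signs_p_near_circle p q m) as [zn [zp [Hzn [Hzp [Fn Fp]]]]]; try lra.
    apply (two_critical_points_of_sign_change p q zn zp); try assumption; intro; lra.
Qed.
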